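(* Let $p\in[1,\infty]$, $d\in\mathbb N$, $m_0:=d$, $m_1\le m_2\le\cdots$ positive integers, $\mathbf W_n\in\mathbb R^{m_n\times m_{n-1}}$ and $\mathbf b_n\in\mathbb R^{m_n}$ for $n\in\mathbb N$. Suppose that for every sequence $(J_n)_{n\in\mathbb N}$ with $J_n\in\mathcal D_{m_n}$ both limits $$\lim_{n\to\infty}\mathbf I_{\infty,m_n}\prod_{i=1}^nJ_i\mathbf W_i \ \text{ in } \mathcal B(\mathbb R^d,\ell^p)\qquad\text{and}\qquad \lim_{n\to\infty}\mathbf I_{\infty,m_n}\sum_{i=1}^n\Big(\prod_{k=i+1}^nJ_k\mathbf W_k\Big)J_i\mathbf b_i\ \text{ in }\ell^p$$ exist. Then the ReLU networks $\mathcal N_n$ converge pointwise on $[0,1]^d$, i.e. for each $x\in[0,1]^d$ the sequence $\tilde{\mathcal N}_n(x)$ converges in $\ell^p$.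
   Context: $\sigma(t)=\max(t,0)$ applied componentwise; $\mathcal N_n(x):=\big(\sigma(\mathbf W_n\cdot+\mathbf b_n)\circ\cdots\circ\sigma(\mathbf W_1\cdot+\mathbf b_1)\big)(x)\in\mathbb R^{m_n}$ for $x\in[0,1]^d$, and $\tilde{\mathcal N}_n(x)\in\ell^p$ is the sequence whose first $m_n$ entries are those of $\mathcal N_n(x)$ and whose remaining entries are $0$. $\mathcal D_m$ is the set of $m\times m$ diagonal matrices with diagonal entries in $\{0,1\}$. $\mathbf I_{\infty,m}$ is the matrix with infinitely many rows and $m$ columns whose top $m\times m$ block is the identity and all other entries zero (the embedding $\mathbb R^m\to\ell^p$). $\mathcal B(\mathbb R^d,\ell^p)$ is the Banach space of bounded linear operators $\mathbb R^d\to\ell^p$ with operator norm induced by $\ell^p$ norms. Products are ordered $\prod_{i=k}^nA_i=A_n\cdots A_k$, and an empty product ($n<k$) is the $m_n\times m_n$ identity. *)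

From HB Require Import structures.
From mathcomp Require Import all_boot all_order all_algebra.
From mathcomp Require Import all_classical all_reals all_analysis.
Set Implicit Arguments. Unset Strict Implicit. Unset Printing Implicit Defensive.
Import Order.TTheory GRing.Theory Num.Theory.
Local Open Scope classical_set_scope.
Local Open Scope ring_scope.

Section Defs.
Variable R : realType.

(* l^p norm of a real sequence, p in [1, +oo] (value +oo if not in l^p) *)
Definition lpnorm (p : \bar R) (a : nat -> R) : \bar R :=
  match p with
  | r%:E => poweR (\sum_(0 <= k <oo) ((`|a k| `^ r)%:E))%E r^-1
  | +oo%E => ereal_sup (range (fun k => (`|a k|)%:E))
  | -oo%E => +oo%E
  end.

Definition ext (k : nat) (x : 'I_k -> R) : nat -> R :=
  fun j => match insub j with Some i => x i | None => 0 end.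

Definition embed (k : nat) (v : 'cV[R]_k) : nat -> R := ext (fun i => v i 0).

(* I_{oo,k} M for M : k x d, given as its d columns (elements of R^nat) *)
Definition embed_mx (k d : nat) (M : 'M[R]_(k, d)) : 'I_d -> nat -> R :=
  fun j => ext (fun i => M i j).

(* operator norm in B(R^d, l^p) of the linear map x |-> sum_j x_j A_j *)
Definition opnorm (p : \bar R) (d : nat) (A : 'I_d -> nat -> R) : \bar R :=
  ereal_sup [set lpnorm p (fun k => \sum_j x j * A j k) |
             x in [set x : 'I_d -> R | (lpnorm p (ext x) <= 1)%E]].

Definition lp_converges (p : \bar R) (a : nat -> nat -> R) : Prop :=
  exists l : nat -> R, forall eps : R, 0 < eps ->
    \forall n \near \oo, (lpnorm p (fun k => (a n k - l k)%R) <= eps%:E)%E.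

Definition op_converges (p : \bar R) (d : nat) (A : nat -> 'I_d -> nat -> R) : Prop :=
  exists L : 'I_d -> nat -> R, forall eps : R, 0 < eps ->
    \forall n \near \oo, (opnorm p (fun j k => (A n j k - L j k)%R) <= eps%:E)%E.

Definition is_D (k : nat) (J : 'M[R]_k) : Prop :=
  (forall i j, i != j -> J i j = 0) /\ (forall i, J i i = 0 \/ J i i = 1).

Definition relu (k : nat) (v : 'cV[R]_k) : 'cV[R]_k := map_mx (fun t => Num.max t 0) v.

Variable m : nat -> nat.
(* W n, b n, J n stand for W_{n+1}, b_{n+1}, J_{n+1} of the paper *)
Variable W : forall n, 'M[R]_(m n.+1, m n).
Variable b : forall n, 'cV[R]_(m n.+1).

Fixpoint relu_net (n : nat) (x : 'cV[R]_(m 0%N)) : 'cV[R]_(m n) :=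
  match n return 'cV[R]_(m n) with
  | 0 => x
  | n'.+1 => relu (W n' *m relu_net n' x + b n')
  end.

Variable J : forall n, 'M[R]_(m n.+1).

Fixpoint prodJW (n : nat) : 'M[R]_(m n, m 0%N) :=
  match n return 'M[R]_(m n, m 0%N) with
  | 0 => 1%:M
  | n'.+1 => J n' *m W n' *m prodJW n'
  end.

(* sum_{i=1}^n (prod_{k=i+1}^n J_k W_k) J_i b_i *)
Fixpoint biasJW (n : nat) : 'cV[R]_(m n) :=
  match n return 'cV[R]_(m n) with
  | 0 => 0
  | n'.+1 => J n' *m W n' *m biasJW n' + J n' *m b n'
  end.

End Defs.

From HB Require Import structures.
From mathcomp Require Import all_boot all_order all_algebra.
From mathcomp Require Import all_classical all_reals all_analysis.
From mathcomp Require Import ring lra.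
Import Order.TTheory GRing.Theory Num.Theory.
Local Open Scope ring_scope.

(* Fix an input x.  Applying the ReLU componentwise to a vector v is the same
   as multiplying v by the 0/1 diagonal matrix that records which entries of
   v are nonnegative.  Taking for J_n the activation pattern of the n-th layer
   at x, the network is therefore affine along its own trajectory:
       N_n(x) = (prod J_i W_i) x + sum_i (prod J_k W_k) J_i b_i.
   The hypothesis applied to this particular sequence (J_n) gives limits L of
   the linear parts in B(R^d, l^p) and c of the bias parts in l^p, and it then
   remains to see that A_n x + B_n -> L x + c whenever A_n -> L in operator
   norm and B_n -> c in l^p.  This last step needs three l^p facts: the
   triangle inequality (Minkowski), the estimate ||K a|| <= K ||a|| for
   integers K, and ||e(y)||_p <= 1 whenever ||y||_1 <= 1, which lets us bound
   ||A y|| by the operator norm after rescaling y into the unit ball. *)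

Section LpNorm.
Context {R : realType}.
Local Open Scope classical_set_scope.

(* On nat every set is measurable, so l^p norms are Lnorms for counting. *)
Let measurable_fun_nat (f : nat -> R) : measurable_fun [set: nat] f.
Proof. by move=> _ Y _; exact: I. Qed.

Lemma lpnorm_triangle (p : \bar R) (a c : nat -> R) : (1 <= p)%E ->
  (lpnorm p (fun k => (a k + c k)%R) <= lpnorm p a + lpnorm p c)%E.
Proof.
case: p => [r|_|//]; last first.
  apply: ge_ereal_sup => _ [k _ <-] /=.
  apply: (@le_trans _ _ (`|a k| + `|c k|)%R%:E); first by rewrite lee_fin ler_normD.
  by rewrite EFinD; apply: leeD; apply: ereal_sup_ubound; exists k.
rewrite lee_fin => r1; have r0 : 0 < r by apply: lt_le_trans r1.
have := minkowski_EFin counting (measurable_fun_nat a) (measurable_fun_nat c) r1.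
by rewrite !Lnorm_counting.
Qed.

(* Homogeneity for positive integer factors, a consequence of Minkowski. *)
Lemma lpnorm_natmul (p : \bar R) (a : nat -> R) (n : nat) : (1 <= p)%E ->
  (lpnorm p (fun k => (n.+1%:R * a k)%R) <= n.+1%:R%:E * lpnorm p a)%E.
Proof.
move=> p1; elim: n => [|n IH].
  by under eq_fun do rewrite mul1r; rewrite mul1e.
under eq_fun do rewrite [n.+2%:R]mulrSr mulrDl mul1r.
apply: (le_trans (lpnorm_triangle _ (fun k => n.+1%:R * a k) a p1)).
by rewrite [n.+2%:R]mulrSr EFinD ge0_muleDl ?lee_fin // mul1e leeD.
Qed.

Lemma powR_le_self (a r : R) : 0 <= a <= 1 -> 1 <= r -> a `^ r <= a.
Proof.
move=> /andP[a0 a1] r1; have [->|an0] := eqVneq a 0.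
  by rewrite powR0 // gt_eqF // (lt_le_trans _ r1).
by apply: ge1r_powR => //; rewrite lt0r an0 a0.
Qed.

Lemma lpnorm_le1_of_l1 (p : \bar R) (c : nat -> R) : (1 <= p)%E ->
  (forall n, \sum_(0 <= k < n) `|c k| <= 1) -> (lpnorm p c <= 1)%E.
Proof.
move=> p1 c_l1.
have c1 k : `|c k| <= 1.
  apply: le_trans (c_l1 k.+1); rewrite big_nat_recr //= lerDr.
  by rewrite sumr_ge0.
case: p p1 => [r|_|//]; last by apply: ge_ereal_sup => _ [k _ <-]; rewrite lee_fin.
rewrite lee_fin => r1 /=; have r0 : 0 < r by apply: lt_le_trans r1.
set S := (\sum_(0 <= k <oo) _)%E.
have S0 : (0 <= S)%E by apply: nneseries_ge0 => k _ _; rewrite lee_fin powR_ge0.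
have S1 : (S <= 1)%E.
  rewrite /S (cvg_lim _ (ereal_nondecreasing_cvgn
     (ereal_nondecreasing_series (fun n _ _ => _))))//.
  apply: ge_ereal_sup => _ [n _ <-] /=.
  rewrite sumEFin lee_fin; apply: le_trans (c_l1 n).
  by apply: ler_sum => k _; rewrite powR_le_self // normr_ge0 c1.
clearbody S; case: S S0 S1 => [s| |] //; rewrite !lee_fin => s0 s1.
have -> : (1 : R) = 1 `^ r^-1 by rewrite powR1.
apply: ge0_ler_powR => //; first by rewrite invr_ge0 ltW.
by rewrite nnegrE.
Qed.

Lemma ext_partial_l1 (d : nat) (y : 'I_d -> R) (n : nat) :
  \sum_(0 <= k < n) `|ext y k| <= \sum_(i < d) `|y i|.
Proof.
have -> : \sum_(i < d) `|y i| = \sum_(0 <= k < n + d) `|ext y k|.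
  rewrite (@big_cat_nat _ _ _ d 0 (n + d)) ?leq_addl //=.
  rewrite [X in _ = _ + X]big1_seq ?addr0; last first.
    move=> k /andP[_]; rewrite mem_index_iota => /andP[dk _].
    by rewrite /ext insubN -?leqNgt // normr0.
  by rewrite big_mkord; apply: eq_bigr => i _; rewrite /ext valK.
rewrite (@big_cat_nat _ _ _ n 0 (n + d)) ?leq_addr //=.
by rewrite lerDl sumr_ge0.
Qed.

Lemma lpnorm_image_le {p : \bar R} {d n : nat} (A : 'I_d -> nat -> R)
    (y : 'I_d -> R) : (1 <= p)%E -> \sum_j `|y j| <= n.+1%:R ->
  (lpnorm p (fun k => (\sum_j y j * A j k)%R) <= n.+1%:R%:E * opnorm p A)%E.
Proof.
move=> p1 y_l1; have K0 : 0 < n.+1%:R :> R by rewrite ltr0n.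
pose z j := y j / n.+1%:R.
have -> : (fun k => \sum_j y j * A j k) =
          (fun k => n.+1%:R * \sum_j z j * A j k).
  apply/funext => k; rewrite mulr_sumr; apply: eq_bigr => j _.
  by rewrite /z mulrA mulrCA divff ?mulr1 // gt_eqF.
apply: (le_trans (lpnorm_natmul _ _ _ p1)); rewrite lee_pmul2l ?lte_fin //.
apply: ereal_sup_ubound; exists z => //=.
apply: lpnorm_le1_of_l1 => // N; apply: (le_trans (ext_partial_l1 _ _ _)).
have -> : \sum_j `|z j| = (\sum_j `|y j|) / n.+1%:R.
  rewrite mulr_suml; apply: eq_bigr => j _.
  by rewrite normrM (gtr0_norm (_ : 0 < n.+1%:R^-1)) // invr_gt0.
by rewrite ler_pdivrMr // mul1r.
Qed.

Lemma lp_converges_affine {p : \bar R} {d : nat} {A : nat -> 'I_d -> nat -> R}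
    {B : nat -> nat -> R} (y : 'I_d -> R) : (1 <= p)%E ->
  op_converges p A -> lp_converges p B ->
  lp_converges p (fun n k => \sum_j y j * A n j k + B n k).
Proof.
move=> p1 [L AL] [c Bc]; exists (fun k => \sum_j y j * L j k + c k) => e e0.
pose K := Num.bound (\sum_j `|y j|).
have y_l1 : \sum_j `|y j| <= K.+1%:R.
  apply: ltW; apply: (lt_le_trans (archi_boundP _)); first exact: sumr_ge0.
  by rewrite ler_nat.
have K0 : 0 < K.+1%:R :> R by rewrite ltr0n.
have eA : 0 < e / 2 / K.+1%:R by rewrite !divr_gt0.
have eB : 0 < e / 2 by rewrite divr_gt0.
apply: filterS2 (AL _ eA) (Bc _ eB) => n An Bn.
have -> : (fun k => \sum_j y j * A n j k + B n k - (\sum_j y j * L j k + c k))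
   = (fun k => \sum_j y j * (A n j k - L j k) + (B n k - c k)).
  apply/funext => k.
  have -> : \sum_j y j * (A n j k - L j k) =
            \sum_j y j * A n j k - \sum_j y j * L j k.
    by rewrite -sumrB; apply: eq_bigr => j _; rewrite mulrBr.
  by ring.
apply: (le_trans (lpnorm_triangle _ _ _ p1)).
apply: (@le_trans _ _ ((K.+1%:R * (e / 2 / K.+1%:R))%:E + (e / 2)%:E)%E).
  apply: leeD => //; rewrite EFinM.
  apply: (le_trans (lpnorm_image_le (fun j k => A n j k - L j k) _ p1 y_l1)).
  by rewrite lee_pmul2l ?lte_fin.
by rewrite -EFinD lee_fin mulrCA divff ?mulr1 ?gt_eqF //; lra.
Qed.

End LpNorm.

Section ReluNetwork.
Context {R : realType}.

Definition activation {k : nat} (v : 'cV[R]_k) : 'M[R]_k :=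
  diag_mx (\row_i (if 0 <= v i 0 then 1 else 0)).

Lemma activation_is_D {k : nat} (v : 'cV[R]_k) : is_D (activation v).
Proof.
split => [i j ij|i]; rewrite !mxE; first by rewrite (negbTE ij) mulr0n.
by rewrite eqxx mulr1n; case: ifP => _; [right|left].
Qed.

Lemma relu_activation {k : nat} (v : 'cV[R]_k) : relu v = activation v *m v.
Proof.
apply/matrixP => i j; rewrite mul_diag_mx !mxE (ord1 j).
by case: lerP => h; rewrite ?mul1r ?mul0r.
Qed.

Variables (m : nat -> nat) (W : forall n, 'M[R]_(m n.+1, m n))
  (b : forall n, 'cV[R]_(m n.+1)) (x : 'cV[R]_(m 0%N)).

Definition net_activation (n : nat) : 'M[R]_(m n.+1) :=
  activation (W n *m relu_net W b n x + b n).

Lemma relu_net_affine (n : nat) :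
  relu_net W b n x =
  prodJW W net_activation n *m x + biasJW W b net_activation n.
Proof.
elim: n => [|n IH] /=; first by rewrite mul1mx addr0.
by rewrite relu_activation -/(net_activation n) IH !mulmxDr !mulmxA addrA.
Qed.

End ReluNetwork.

Arguments net_activation {R m} W b x n.

Lemma embed_affine (R : realType) (k d : nat) (P : 'M[R]_(k, d))
    (y : 'cV[R]_d) (B : 'cV[R]_k) (j : nat) :
  embed (P *m y + B) j = \sum_i y i 0 * embed_mx P i j + embed B j.
Proof.
rewrite /embed /embed_mx /ext; case: insub => [i|].
  by rewrite !mxE; congr (_ + _); apply: eq_bigr => l _; rewrite mulrC.
by rewrite big1 ?add0r // => l _; rewrite mulr0.
Qed.

Theorem theorem3p6 (R : realType) (p : \bar R) (m : nat -> nat)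
  (W : forall n, 'M[R]_(m n.+1, m n)) (b : forall n, 'cV[R]_(m n.+1)) :
  (1 <= p)%E ->
  (forall n, (0 < m n.+1)%N) ->
  (forall n, (m n.+1 <= m n.+2)%N) ->
  (forall J : forall n, 'M[R]_(m n.+1), (forall n, is_D (J n)) ->
     op_converges p (fun n => embed_mx (prodJW W J n)) /\
     lp_converges p (fun n => embed (biasJW W b J n))) ->
  forall x : 'cV[R]_(m 0%N), (forall i, 0 <= x i 0 <= 1) ->
    lp_converges p (fun n => embed (relu_net W b n x)).
Proof.
move=> p1 _ _ hyp x _.
pose J := net_activation W b x.
have [convA convB] := hyp J (fun n => activation_is_D _).
have -> : (fun n => embed (relu_net W b n x)) =
          (fun n k => \sum_i x i 0 * embed_mx (prodJW W J n) i k +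
                      embed (biasJW W b J n) k).
  by apply/funext => n; apply/funext => k; rewrite relu_net_affine embed_affine.
exact (lp_converges_affine (fun i => x i 0) p1 convA convB).
Qed.
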